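(* Let $\mathbb{K}$ be a field of characteristic $0$, $\alpha\in\mathbb{K}$, $A=A(\alpha,0,1)$ and $\omega=du-\alpha ud-1\in A$. For $p\in\langle\omega\rangle$ let $[p]$ denote its class in the $A$-bimodule $\langle\omega\rangle/\langle\omega\rangle^2$. Then $\{[u^i\omega d^l]: i,l\ge0\}$ is a $\mathbb{K}$-linear basis of $\langle\omega\rangle/\langle\omega\rangle^2$. Moreover, if $\alpha\neq1$, then for all $i,l\ge0$ $$[u^i\omega d^lu]=\frac{\alpha^l-1}{\alpha-1}[u^i\omega d^{l-1}],\qquad [du^i\omega d^l]=\frac{\alpha^i-1}{\alpha-1}[u^{i-1}\omega d^l],$$ where the right-hand sides are interpreted as $0$ when $l=0$ (first formula) or $i=0$ (second formula).
   Context: For $(\alpha,\beta,\gamma)\in\mathbb{K}^3$, the down-up algebra $A(\alpha,\beta,\gamma)$ is the quotient of $\mathbb{K}\langle d,u\rangle$ by the two-sided ideal generated by $d^2u-(\alpha dud+\beta ud^2+\gamma d)$ and $du^2-(\alpha udu+\beta u^2d+\gamma u)$. $\langle\omega\rangle$ is the two-sided ideal generated by $\omega$. *)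

From HB Require Import structures.
From mathcomp Require Import all_boot all_order all_algebra.
Set Implicit Arguments. Unset Strict Implicit. Unset Printing Implicit Defensive.
Import Order.TTheory GRing.Theory Num.Theory.
Local Open Scope ring_scope.

Definition downup_rel (K : fieldType) (B : algType K) (al be ga : K) (d u : B) : Prop :=
  d * d * u = al *: (d * u * d) + be *: (u * d * d) + ga *: d /\
  d * u * u = al *: (u * d * u) + be *: (u * u * d) + ga *: u.

Definition is_alg_hom (K : fieldType) (A B : algType K) (f : A -> B) : Prop :=
  (forall x y : A, f (x + y) = f x + f y) /\
  (forall (k : K) (x : A), f (k *: x) = k *: f x) /\
  (forall x y : A, f (x * y) = f x * f y) /\
  f 1 = 1.

(* (A, d, u) is the down-up algebra A(al,be,ga): it is generated by d, u
   subject to the defining relations, i.e. it is the quotient of K<d,u> by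
   the ideal of the relations; expressed by its universal property
   (initial K-algebra with two elements satisfying the relations). *)
Definition is_downup_algebra (K : fieldType) (al be ga : K)
    (A : algType K) (d u : A) : Prop :=
  downup_rel al be ga d u /\
  forall (B : algType K) (d' u' : B), downup_rel al be ga d' u' ->
    exists f : A -> B,
      [/\ is_alg_hom f, f d = d', f u = u' &
          forall g : A -> B, is_alg_hom g -> g d = d' -> g u = u' ->
            forall x, g x = f x].

Definition in_ideal (K : fieldType) (A : algType K) (w x : A) : Prop :=
  exists s : seq (A * A), x = \sum_(p <- s) p.1 * w * p.2.

Definition in_ideal_sq (K : fieldType) (A : algType K) (w x : A) : Prop :=
  exists s : seq (A * A),
    (forall p, p \in s -> in_ideal w p.1 /\ in_ideal w p.2) /\
    x = \sum_(p <- s) p.1 * p.2.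

From HB Require Import structures.
From mathcomp Require Import all_boot all_order all_algebra.
From mathcomp Require Import boolp ring.
Set Implicit Arguments. Unset Strict Implicit. Unset Printing Implicit Defensive.
Import Order.TTheory GRing.Theory Num.Theory.
Local Open Scope ring_scope.

(** Modulo <ω>², the relations dω = 0 = ωu turn du = α ud + 1 + ω into
    d u^i ω ≡ [i] u^(i-1) ω and ω d^l u ≡ [l] ω d^(l-1), where
    [n] = 1 + α + ... + α^(n-1).  Hence the span of the u^i ω d^l modulo <ω>²
    is stable under multiplication by d and u on both sides, and as d, u
    generate A it contains every a ω b.  Linear independence is read off a
    concrete representation: the left action of A on A/<ω>², written in the
    basis u^k d^m, u^k ω d^m.  There <ω>² acts as zero while u^i ω d^l maps
    1 to the basis vector u^i ω d^l. *)

Fixpoint qnat (K : fieldType) (al : K) (n : nat) : K :=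
  if n is n'.+1 then al * qnat al n' + 1 else 0.

Lemma qnatE (K : fieldType) (al : K) n :
  al != 1 -> qnat al n = (al ^+ n - 1) / (al - 1).
Proof.
move=> al_neq1; have al1_neq0 : al - 1 != 0 by rewrite subr_eq0.
elim: n => [|n IHn] /=; first by rewrite expr0 subrr mul0r.
by rewrite IHn exprS; field.
Qed.

(** * Congruence modulo the square of a principal ideal *)

Section IdealSquare.
Variables (K : fieldType) (A : algType K) (w : A).

Lemma in_idealMl a x : in_ideal w x -> in_ideal w (a * x).
Proof.
move=> [s ->]; exists [seq (a * p.1, p.2) | p <- s].
by rewrite big_map mulr_sumr; apply: eq_bigr => p _; rewrite /= !mulrA.
Qed.

Lemma in_idealMr x b : in_ideal w x -> in_ideal w (x * b).
Proof.
move=> [s ->]; exists [seq (p.1, p.2 * b) | p <- s].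
by rewrite big_map mulr_suml; apply: eq_bigr => p _; rewrite /= !mulrA.
Qed.

Lemma in_ideal_gen a b : in_ideal w (a * w * b).
Proof. by exists [:: (a, b)]; rewrite big_seq1. Qed.

Lemma in_ideal_sq0 : in_ideal_sq w 0.
Proof. by exists [::]; rewrite big_nil. Qed.

Lemma in_ideal_sqD x y : in_ideal_sq w x -> in_ideal_sq w y -> in_ideal_sq w (x + y).
Proof.
move=> [s [Hs ->]] [t [Ht ->]]; exists (s ++ t); rewrite big_cat; split => //.
by move=> p; rewrite mem_cat => /orP[/Hs | /Ht].
Qed.

Lemma in_ideal_sqMl a x : in_ideal_sq w x -> in_ideal_sq w (a * x).
Proof.
move=> [s [Hs ->]]; exists [seq (a * p.1, p.2) | p <- s]; split.
  by move=> _ /mapP[p /Hs[H1 H2] ->]; split => //; apply: in_idealMl.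
by rewrite big_map mulr_sumr; apply: eq_bigr => p _; rewrite /= mulrA.
Qed.

Lemma in_ideal_sqMr x b : in_ideal_sq w x -> in_ideal_sq w (x * b).
Proof.
move=> [s [Hs ->]]; exists [seq (p.1, p.2 * b) | p <- s]; split.
  by move=> _ /mapP[p /Hs[H1 H2] ->]; split => //; apply: in_idealMr.
by rewrite big_map mulr_suml; apply: eq_bigr => p _; rewrite /= mulrA.
Qed.

Lemma in_ideal_sqZ k x : in_ideal_sq w x -> in_ideal_sq w (k *: x).
Proof. by rewrite -mulr_algl; apply: in_ideal_sqMl. Qed.

Lemma in_ideal_sq_mul x y : in_ideal w x -> in_ideal w y -> in_ideal_sq w (x * y).
Proof. by move=> Hx Hy; exists [:: (x, y)]; rewrite big_seq1; split => // p /[!inE] /eqP->. Qed.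

Lemma in_ideal_sq_wMw x : in_ideal_sq w (w * x * w).
Proof.
apply: in_ideal_sq_mul; first by rewrite -[w * x]mul1r mulrA; apply: in_ideal_gen.
by have := in_ideal_gen 1 1; rewrite mul1r mulr1.
Qed.

Definition eqsq (x y : A) := in_ideal_sq w (x - y).

Lemma eqsq_refl x : eqsq x x.
Proof. by rewrite /eqsq subrr; apply: in_ideal_sq0. Qed.

Lemma eqsq_trans x y z : eqsq x y -> eqsq y z -> eqsq x z.
Proof. by rewrite /eqsq => /in_ideal_sqD/[apply]; rewrite addrA subrK. Qed.

Lemma eqsqD x y x' y' : eqsq x y -> eqsq x' y' -> eqsq (x + x') (y + y').
Proof. by rewrite /eqsq => /in_ideal_sqD/[apply]; rewrite opprD addrACA. Qed.

Lemma eqsqZ k x y : eqsq x y -> eqsq (k *: x) (k *: y).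
Proof. by rewrite /eqsq => /(in_ideal_sqZ k); rewrite scalerBr. Qed.

Lemma eqsqMl a x y : eqsq x y -> eqsq (a * x) (a * y).
Proof. by rewrite /eqsq => /(in_ideal_sqMl a); rewrite mulrBr. Qed.

Lemma eqsqMr b x y : eqsq x y -> eqsq (x * b) (y * b).
Proof. by rewrite /eqsq => /(in_ideal_sqMr b); rewrite mulrBl. Qed.

Lemma eqsq_addsq x z : in_ideal_sq w z -> eqsq (x + z) x.
Proof. by rewrite /eqsq addrC addKr. Qed.

Definition span_mod (T : Type) (F : T -> A) (x : A) :=
  exists s : seq (T * K), eqsq x (\sum_(t <- s) t.2 *: F t.1).

Section Span.
Variables (T : Type) (F : T -> A).

Lemma span_mod0 : span_mod F 0.
Proof. by exists [::]; rewrite big_nil; apply: eqsq_refl. Qed.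

Lemma span_modD x y : span_mod F x -> span_mod F y -> span_mod F (x + y).
Proof. by move=> [s Hs] [t Ht]; exists (s ++ t); rewrite big_cat; apply: eqsqD. Qed.

Lemma span_modZ k x : span_mod F x -> span_mod F (k *: x).
Proof.
move=> [s Hs]; exists [seq (t.1, k * t.2) | t <- s].
rewrite big_map (eq_bigr (fun t => k *: (t.2 *: F t.1))) => [|t _]; last by rewrite scalerA.
by rewrite -scaler_sumr; apply: eqsqZ.
Qed.

Lemma span_mod_gen t : span_mod F (F t).
Proof. by exists [:: (t, 1)]; rewrite big_seq1 scale1r; apply: eqsq_refl. Qed.

Lemma span_mod_eqsq x y : eqsq x y -> span_mod F y -> span_mod F x.
Proof. by move=> Hxy [s Hs]; exists s; apply: eqsq_trans Hxy Hs. Qed.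

Lemma span_mod_sum I (r : seq I) (P : pred I) (G : I -> A) :
  (forall i, P i -> span_mod F (G i)) -> span_mod F (\sum_(i <- r | P i) G i).
Proof. by move=> HG; apply: big_ind => //; [apply: span_mod0 | apply: span_modD]. Qed.

Lemma span_modMl a x :
  (forall t, span_mod F (a * F t)) -> span_mod F x -> span_mod F (a * x).
Proof.
move=> HaF [s Hs]; apply: span_mod_eqsq (eqsqMl a Hs) _.
rewrite mulr_sumr; apply: span_mod_sum => t _.
by rewrite -scalerAr; apply: span_modZ.
Qed.

Lemma span_modMr b x :
  (forall t, span_mod F (F t * b)) -> span_mod F x -> span_mod F (x * b).
Proof.
move=> HFb [s Hs]; apply: span_mod_eqsq (eqsqMr b Hs) _.
rewrite mulr_suml; apply: span_mod_sum => t _.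
by rewrite -scalerAl; apply: span_modZ.
Qed.

End Span.
End IdealSquare.

(** * Commutation relations modulo <ω>² *)

Definition omega (K : fieldType) (A : algType K) (al : K) (d u : A) : A :=
  d * u - al *: (u * d) - 1.

Section Relations.
Variables (K : fieldType) (A : algType K) (al : K) (d u : A).
Hypothesis rel : downup_rel al 0 1 d u.
Local Notation w := (omega al d u).

Lemma mul_d_omega : d * w = 0.
Proof.
case: rel => dduE _; rewrite /omega !mulrBr mulr1 -scalerAr !mulrA dduE.
by rewrite scale0r scale1r addr0 (addrC (al *: _)) addrK subrr.
Qed.

Lemma mul_omega_u : w * u = 0.
Proof.
case: rel => _ duuE; rewrite /omega !mulrBl mul1r -scalerAl duuE.
by rewrite scale0r scale1r addr0 (addrC (al *: _)) addrK subrr.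
Qed.

Lemma mul_d_u : d * u = al *: (u * d) + 1 + w.
Proof. by rewrite /omega -[d * u - _ - _]addrA -opprD addrC addNKr. Qed.

Lemma d_uX_omega i : eqsq w (d * (u ^+ i * w)) (qnat al i *: (u ^+ i.-1 * w)).
Proof.
elim: i => [|i IHi]; first by rewrite expr0 mul1r mul_d_omega scale0r; apply: eqsq_refl.
have -> : d * (u ^+ i.+1 * w)
    = al *: (u * (d * (u ^+ i * w))) + u ^+ i * w + w * (u ^+ i * w).
  by rewrite exprS -(mulrA u) (mulrA d) mul_d_u !mulrDl mul1r -scalerAl -(mulrA u d).
have uqE : u * (qnat al i *: (u ^+ i.-1 * w)) = qnat al i *: (u ^+ i * w).
  by case: i {IHi} => [|i] /=; rewrite ?scale0r ?mulr0 // -scalerAr mulrA -exprS.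
have wuw_sq : in_ideal_sq w (w * (u ^+ i * w)).
  by rewrite mulrA; apply: in_ideal_sq_wMw.
apply: eqsq_trans (eqsq_addsq _ wuw_sq) _.
have := eqsqD (eqsqZ al (eqsqMl u IHi)) (eqsq_refl w (u ^+ i * w)).
by rewrite uqE scalerA /= scalerDl scale1r.
Qed.

Lemma omega_dX_u l : eqsq w (w * d ^+ l * u) (qnat al l *: (w * d ^+ l.-1)).
Proof.
elim: l => [|l IHl]; first by rewrite expr0 mulr1 mul_omega_u scale0r; apply: eqsq_refl.
have -> : w * d ^+ l.+1 * u
    = al *: (w * d ^+ l * u * d) + w * d ^+ l + w * d ^+ l * w.
  by rewrite exprSr (mulrA w) -(mulrA _ d u) mul_d_u !mulrDr mulr1 -scalerAr !mulrA.
have qdE : qnat al l *: (w * d ^+ l.-1) * d = qnat al l *: (w * d ^+ l).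
  by case: l {IHl} => [|l] /=; rewrite ?scale0r ?mul0r // -scalerAl -mulrA -exprSr.
apply: eqsq_trans (eqsq_addsq _ (in_ideal_sq_wMw _ _)) _.
have := eqsqD (eqsqZ al (eqsqMr d IHl)) (eqsq_refl w (w * d ^+ l)).
by rewrite qdE scalerA /= scalerDl scale1r.
Qed.

Lemma d_uX_omega_dX i l :
  eqsq w (d * u ^+ i * w * d ^+ l) (qnat al i *: (u ^+ i.-1 * w * d ^+ l)).
Proof. by have := eqsqMr (d ^+ l) (d_uX_omega i); rewrite -scalerAl !mulrA. Qed.

Lemma uX_omega_dX_u i l :
  eqsq w (u ^+ i * w * d ^+ l * u) (qnat al l *: (u ^+ i * w * d ^+ l.-1)).
Proof. by have := eqsqMl (u ^+ i) (omega_dX_u l); rewrite -scalerAr !mulrA. Qed.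

End Relations.

(** * The generators d and u generate A *)

Section Generation.
Variables (K : fieldType) (al be ga : K) (A : algType K) (d u : A).
Hypothesis HA : is_downup_algebra al be ga d u.
Variable S : {pred A}.
Hypothesis S_closed : GRing.subsemialg_closed S.
Hypotheses (Sd : d \in S) (Su : u \in S).

HB.instance Definition _ := GRing.isSubalgClosed.Build K A S S_closed.

Record sub_alg := SubAlg { sub_val : A; sub_valP : sub_val \in S }.
HB.instance Definition _ := [isSub for sub_val].
HB.instance Definition _ := [Choice of sub_alg by <:].
HB.instance Definition _ := [SubChoice_isSubAlgebra of sub_alg by <:].

Lemma downup_subalg_full x : x \in S.
Proof.
have id_hom : is_alg_hom (@id A) by [].
have rel_S : downup_rel al be ga (SubAlg Sd) (SubAlg Su).
  by case: HA.1 => dduE duuE; split; apply: val_inj.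
have [f [[fD [fZ [fM f1]]] fd fu _]] := HA.2 _ _ _ rel_S.
have [g [_ _ _ uniq_hom]] := HA.2 _ _ _ HA.1.
have val_f_hom : is_alg_hom (fun y => sub_val (f y)).
  by split; [|split; [|split]] => *; rewrite ?fD ?fZ ?fM ?f1.
have -> : x = sub_val (f x).
  by rewrite (uniq_hom _ val_f_hom) ?fd ?fu // -(uniq_hom id).
exact: sub_valP.
Qed.

End Generation.

Lemma sum_square1 (V : zmodType) n a b (G : nat -> nat -> V) :
  (a < n)%N -> (b < n)%N -> (forall i l, (i, l) != (a, b) -> G i l = 0) ->
  \sum_(i < n) \sum_(l < n) G i l = G a b.
Proof.
move=> ltan ltbn G0; rewrite (bigD1 (Ordinal ltan)) //= (bigD1 (Ordinal ltbn)) //=.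
rewrite big1 ?addr0 => [|l]; last first.
  by rewrite -val_eqE /= => /negbTE neq_lb; apply: G0; rewrite xpair_eqE neq_lb andbF.
rewrite big1 ?addr0 // => i; rewrite -val_eqE /= => /negbTE neq_ia.
by apply: big1 => l _; apply: G0; rewrite xpair_eqE neq_ia.
Qed.

Lemma sum_seq_square (K : fieldType) (V : lmodType K) (F : nat -> nat -> V)
    (s : seq ((nat * nat) * K)) :
  exists n (c : nat -> nat -> K),
    \sum_(t <- s) t.2 *: F t.1.1 t.1.2 = \sum_(i < n) \sum_(l < n) c i l *: F i l.
Proof.
pose n := (\max_(t <- s) maxn t.1.1 t.1.2).+1.
exists n, (fun i l => \sum_(t <- s) (if t.1 == (i, l) then t.2 else 0)).
under [RHS]eq_bigr do under eq_bigr do rewrite scaler_suml.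
under [RHS]eq_bigr do rewrite exchange_big.
rewrite [RHS]exchange_big /= big_seq [RHS]big_seq; apply: eq_bigr => -[[a b] k] s_abk /=.
have ab_lt_n : (maxn a b < n)%N.
  by rewrite ltnS (@leq_bigmax_seq _ s xpredT (fun t => maxn t.1.1 t.1.2) _ s_abk).
rewrite (@sum_square1 _ n a b (fun i l => (if (a, b) == (i, l) then k else 0) *: F i l)).
- by rewrite eqxx.
- exact: leq_ltn_trans (leq_maxl a b) ab_lt_n.
- exact: leq_ltn_trans (leq_maxr a b) ab_lt_n.
- by move=> i l; rewrite eq_sym => /negbTE ->; rewrite scale0r.
Qed.

(** * The classes of the u^i ω d^l span <ω>/<ω>² *)

Section Spanning.
Variables (K : fieldType) (al : K) (A : algType K) (d u : A).
Hypothesis HA : is_downup_algebra al 0 1 d u.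
Local Notation w := (omega al d u).

Definition uwd (t : nat * nat) : A := u ^+ t.1 * w * d ^+ t.2.

Definition span_stable (a : A) :=
  forall t, span_mod w uwd (a * uwd t) /\ span_mod w uwd (uwd t * a).

Lemma span_stable_closed : GRing.subsemialg_closed [pred a | `[< span_stable a >]].
Proof.
have stableP a : reflect (span_stable a) (a \in [pred a | `[< span_stable a >]]).
  exact: asboolP.
split; [|split|..].
- by apply/stableP => t; rewrite mul1r mulr1; split; apply: span_mod_gen.
- by apply/stableP => t; rewrite mul0r mulr0; split; apply: span_mod0.
- move=> a b /stableP Ha /stableP Hb; apply/stableP => t.
  by rewrite mulrDl mulrDr; split; apply: span_modD; [exact: (Ha t).1 | exact: (Hb t).1
                                                     | exact: (Ha t).2 | exact: (Hb t).2].
- move=> k a /stableP Ha; apply/stableP => t.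
  by rewrite -scalerAl -scalerAr; split; apply: span_modZ; [exact: (Ha t).1 | exact: (Ha t).2].
- move=> a b /stableP Ha /stableP Hb; apply/stableP => t; split.
  + by rewrite -mulrA; apply: span_modMl => [s|]; [exact: (Ha s).1 | exact: (Hb t).1].
  + by rewrite mulrA; apply: span_modMr => [s|]; [exact: (Hb s).2 | exact: (Ha t).2].
Qed.

Lemma span_stable_d : span_stable d.
Proof.
move=> [i l]; split; rewrite /uwd /=.
- rewrite !mulrA; apply: span_mod_eqsq (d_uX_omega_dX HA.1 i l) _.
  by apply: span_modZ; apply: (span_mod_gen _ _ (i.-1, l)).
- by rewrite -mulrA -exprSr; apply: (span_mod_gen _ _ (i, l.+1)).
Qed.

Lemma span_stable_u : span_stable u.
Proof.
move=> [i l]; split; rewrite /uwd /=.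
- by rewrite !mulrA -exprS; apply: (span_mod_gen _ _ (i.+1, l)).
- apply: span_mod_eqsq (uX_omega_dX_u HA.1 i l) _.
  by apply: span_modZ; apply: (span_mod_gen _ _ (i, l.-1)).
Qed.

Lemma span_mod_ideal_gen a b : span_mod w uwd (a * w * b).
Proof.
have stable x : span_stable x.
  apply/asboolP; apply: (downup_subalg_full HA span_stable_closed); apply/asboolP.
  - exact: span_stable_d.
  - exact: span_stable_u.
apply: span_modMr => [t|]; first exact: (stable b t).2.
by have := (stable a (0, 0)%N).1; rewrite /uwd /= expr0 mul1r mulr1.
Qed.

Lemma ideal_span_uwd p : in_ideal w p ->
  exists n (c : nat -> nat -> K),
    in_ideal_sq w (p - \sum_(i < n) \sum_(l < n) c i l *: (u ^+ i * w * d ^+ l)).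
Proof.
move=> [s ->].
have [t sumE] : span_mod w uwd (\sum_(q <- s) q.1 * w * q.2).
  by apply: span_mod_sum => q _; apply: span_mod_ideal_gen.
have [n [c sum_tE]] := sum_seq_square (fun i l => u ^+ i * w * d ^+ l) t.
by exists n, c; rewrite -sum_tE.
Qed.

End Spanning.

(** * A concrete representation *)

Section Endomorphisms.
Variable K : fieldType.

(* In the representation below, [v true k m] is the coordinate of v on
   u^k d^m and [v false k m] its coordinate on u^k ω d^m; thus [bottom v]
   says that v lies in <ω>/<ω>². *)
Definition vec := bool -> nat -> nat -> K.

Definition vadd (v v' : vec) : vec := fun s k m => v s k m + v' s k m.
Definition vscale (a : K) (v : vec) : vec := fun s k m => a * v s k m.
Definition vopp (v : vec) : vec := fun s k m => - v s k m.
Definition vzero : vec := fun _ _ _ => 0.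

Definition bottom (v : vec) := forall k m, v true k m = 0.

Record endo := Endo {
  act : vec -> vec;
  actD : forall v v', act (vadd v v') = vadd (act v) (act v');
  actZ : forall a v, act (vscale a v) = vscale a (act v);
  act_bottom : forall v, bottom v -> bottom (act v) }.

Lemma endo_inj (T T' : endo) : act T = act T' -> T = T'.
Proof.
case: T T' => f fD fZ fB [f' f'D f'Z f'B] /= eq_ff'; subst f'.
by congr Endo; apply: Prop_irrelevance.
Qed.

Ltac vec_ext := apply: funext; intro; apply: funext; intro; apply: funext; intro.

Lemma act0 (T : endo) : act T vzero = vzero.
Proof.
have -> : vzero = vscale 0 vzero by vec_ext; rewrite /vscale mul0r.
by rewrite actZ; vec_ext; rewrite /vscale !mul0r.
Qed.

HB.instance Definition _ := gen_eqMixin endo.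
HB.instance Definition _ := gen_choiceMixin endo.

Definition endo0 : endo.
refine (@Endo (fun _ => vzero) _ _ _) => //.
- by move=> v v'; vec_ext; rewrite /vadd /vzero addr0.
- by move=> a v; vec_ext; rewrite /vscale /vzero mulr0.
Defined.

Definition endo_add (T T' : endo) : endo.
refine (@Endo (fun v => vadd (act T v) (act T' v)) _ _ _).
- by move=> v v'; rewrite !actD; vec_ext; rewrite /vadd addrACA.
- by move=> a v; rewrite !actZ; vec_ext; rewrite /vadd /vscale mulrDr.
- by move=> v vB k m; rewrite /vadd !act_bottom // addr0.
Defined.

Definition endo_opp (T : endo) : endo.
refine (@Endo (fun v => vopp (act T v)) _ _ _).
- by move=> v v'; rewrite actD; vec_ext; rewrite /vadd /vopp opprD.
- by move=> a v; rewrite actZ; vec_ext; rewrite /vopp /vscale mulrN.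
- by move=> v vB k m; rewrite /vopp act_bottom // oppr0.
Defined.

Lemma endo_addA : associative endo_add.
Proof. by move=> T T' T''; apply: endo_inj; apply: funext => v; vec_ext; rewrite /= /vadd addrA. Qed.
Lemma endo_addC : commutative endo_add.
Proof. by move=> T T'; apply: endo_inj; apply: funext => v; vec_ext; rewrite /= /vadd addrC. Qed.
Lemma endo_add0 : left_id endo0 endo_add.
Proof. by move=> T; apply: endo_inj; apply: funext => v; vec_ext; rewrite /= /vadd /vzero add0r. Qed.
Lemma endo_addN : left_inverse endo0 endo_opp endo_add.
Proof. by move=> T; apply: endo_inj; apply: funext => v; vec_ext; rewrite /= /vadd /vopp addNr. Qed.

HB.instance Definition _ := GRing.isZmodule.Build endo endo_addA endo_addC endo_add0 endo_addN.

Definition endo1 : endo := @Endo id (fun _ _ => erefl) (fun _ _ => erefl) (fun _ vB => vB).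

Definition endo_mul (T T' : endo) : endo.
refine (@Endo (fun v => act T (act T' v)) _ _ _).
- by move=> v v'; rewrite !actD.
- by move=> a v; rewrite !actZ.
- by move=> v vB; do 2!apply: act_bottom.
Defined.

Lemma endo_mulA : associative endo_mul.
Proof. by move=> T T' T''; apply: endo_inj. Qed.
Lemma endo_mul1 : left_id endo1 endo_mul.
Proof. by move=> T; apply: endo_inj. Qed.
Lemma endo_mulr1 : right_id endo1 endo_mul.
Proof. by move=> T; apply: endo_inj. Qed.
Lemma endo_mulDl : left_distributive endo_mul +%R.
Proof. by move=> T T' T''; apply: endo_inj. Qed.
Lemma endo_mulDr : right_distributive endo_mul +%R.
Proof. by move=> T T' T''; apply: endo_inj; apply: funext => v /=; rewrite actD. Qed.
Lemma endo1_neq0 : endo1 != 0.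
Proof.
apply/eqP => /(congr1 (fun T => act T (fun _ _ _ => 1) true 0 0)) /=.
by rewrite /vzero => /eqP; rewrite oner_eq0.
Qed.

HB.instance Definition _ := GRing.Zmodule_isNzRing.Build endo
  endo_mulA endo_mul1 endo_mulr1 endo_mulDl endo_mulDr endo1_neq0.

Definition endo_scale (a : K) (T : endo) : endo.
refine (@Endo (fun v => vscale a (act T v)) _ _ _).
- by move=> v v'; rewrite actD; vec_ext; rewrite /vadd /vscale mulrDr.
- by move=> b v; rewrite actZ; vec_ext; rewrite /vscale mulrCA.
- by move=> v vB k m; rewrite /vscale act_bottom // mulr0.
Defined.

Lemma endo_scaleA a b T : endo_scale a (endo_scale b T) = endo_scale (a * b) T.
Proof. by apply: endo_inj; apply: funext => v; vec_ext; rewrite /= /vscale mulrA. Qed.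
Lemma endo_scale1 : left_id 1 endo_scale.
Proof. by move=> T; apply: endo_inj; apply: funext => v; vec_ext; rewrite /= /vscale mul1r. Qed.
Lemma endo_scaleDr : right_distributive endo_scale +%R.
Proof. by move=> a T T'; apply: endo_inj; apply: funext => v; vec_ext; rewrite /= /vscale /vadd mulrDr. Qed.
Lemma endo_scaleDl T : {morph endo_scale^~ T : a b / a + b}.
Proof. by move=> a b; apply: endo_inj; apply: funext => v; vec_ext; rewrite /= /vscale /vadd mulrDl. Qed.

HB.instance Definition _ := GRing.Zmodule_isLmodule.Build K endo
  endo_scaleA endo_scale1 endo_scaleDr endo_scaleDl.

Lemma endo_scaleAl (a : K) (T T' : endo) : a *: (T * T') = (a *: T) * T'.
Proof. by apply: endo_inj. Qed.
HB.instance Definition _ := GRing.Lmodule_isLalgebra.Build K endo endo_scaleAl.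
Lemma endo_scaleAr (a : K) (T T' : endo) : a *: (T * T') = T * (a *: T').
Proof. by apply: endo_inj; apply: funext => v /=; rewrite actZ. Qed.
HB.instance Definition _ := GRing.Lalgebra_isAlgebra.Build K endo endo_scaleAr.

Lemma act_mul (T T' : endo) v : act (T * T') v = act T (act T' v). Proof. by []. Qed.
Lemma act_add (T T' : endo) v : act (T + T') v = vadd (act T v) (act T' v). Proof. by []. Qed.
Lemma act_scale a (T : endo) v : act (a *: T) v = vscale a (act T v). Proof. by []. Qed.

End Endomorphisms.

Section Model.
Variables (K : fieldType) (al : K).

(* The left actions of d and u on A/<ω>²: modulo <ω>²,
   d u^(k+1) d^m = α^(k+1) u^(k+1) d^(m+1) + [k+1] u^k d^m + α^k u^k ω d^m
   and d u^(k+1) ω d^m = [k+1] u^k ω d^m, read here in coordinates. *)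
Definition D_act (v : vec K) : vec K := fun s k m =>
  if s then al ^+ k * (if m is m'.+1 then v true k m' else 0) + qnat al k.+1 * v true k.+1 m
  else al ^+ k * v true k.+1 m + qnat al k.+1 * v false k.+1 m.

Definition U_act (v : vec K) : vec K := fun s k m => if k is k'.+1 then v s k' m else 0.

Definition D_endo : endo K.
refine (@Endo K D_act _ _ _).
- move=> v v'; apply: funext => -[]; apply: funext => k; apply: funext => -[|m];
  rewrite /D_act /vadd /=; ring.
- move=> a v; apply: funext => -[]; apply: funext => k; apply: funext => -[|m];
  rewrite /D_act /vscale /=; ring.
- by move=> v vB k [|m]; rewrite /D_act !vB ?mulr0 addr0.
Defined.

Definition U_endo : endo K.
refine (@Endo K U_act _ _ _).
- by move=> v v'; apply: funext => s; apply: funext => -[|k]; apply: funext => m;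
  rewrite /U_act /vadd ?addr0.
- by move=> a v; apply: funext => s; apply: funext => -[|k]; apply: funext => m;
  rewrite /U_act /vscale ?mulr0.
- by move=> v vB [|k] m; rewrite /U_act ?vB.
Defined.

Local Notation W := (omega al D_endo U_endo).

(* The left action of ω: it kills u^(k+1) d^m and the whole of <ω>/<ω>². *)
Definition W_act (v : vec K) : vec K :=
  fun s k m => if s then 0 else if k is 0 then v true 0 m else 0.

Lemma act_omega v : act W v = W_act v.
Proof.
apply: funext => -[]; apply: funext => -[|k]; apply: funext => -[|m];
rewrite /omega /= /vadd /vopp /vscale /D_act /U_act /W_act /= ?exprS ?expr0; ring.
Qed.

Lemma model_downup_rel : downup_rel al 0 1 D_endo U_endo.
Proof.
have DW0 : D_endo * W = 0.
  apply: endo_inj; apply: funext => v; rewrite act_mul act_omega.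
  apply: funext => -[]; apply: funext => k; apply: funext => -[|m];
  rewrite /= /D_act /W_act /vzero /=; ring.
have WU0 : W * U_endo = 0.
  apply: endo_inj; apply: funext => v; rewrite act_mul act_omega.
  by apply: funext => -[]; apply: funext => -[|k]; apply: funext => m.
rewrite /downup_rel !scale0r !scale1r !addr0; split; apply/eqP; rewrite -subr_eq0; apply/eqP.
- by rewrite -DW0 /omega !mulrBr mulr1 -scalerAr !mulrA opprD addrA.
- by rewrite -WU0 /omega !mulrBl mul1r -scalerAl opprD addrA.
Qed.

Definition lowering (T : endo K) :=
  (forall v, bottom (act T v)) /\ (forall v, bottom v -> act T v = vzero K).

Lemma lowering0 : lowering 0.
Proof. by []. Qed.

Lemma loweringD T T' : lowering T -> lowering T' -> lowering (T + T').
Proof.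
move=> [TB T0] [T'B T'0]; split => v.
  by move=> k m; rewrite act_add /vadd TB T'B addr0.
move=> vB; rewrite act_add T0 // T'0 //.
by apply: funext => s; apply: funext => k; apply: funext => m; rewrite /vadd /vzero addr0.
Qed.

Lemma lowering_omega S T : lowering (S * W * T).
Proof.
split => v; rewrite !act_mul act_omega.
  by apply: act_bottom.
move=> vB; have -> : W_act (act T v) = vzero K.
  by apply: funext => -[]; apply: funext => -[|k]; apply: funext => m //=; apply: act_bottom.
exact: act0.
Qed.

Lemma lowering_mul T T' v : lowering T -> lowering T' -> act (T * T') v = vzero K.
Proof. by move=> [_ T0] [T'B _]; rewrite act_mul T0. Qed.

Definition delta (s0 : bool) (k0 m0 : nat) : vec K :=
  fun s k m => if (s == s0) && (k == k0) && (m == m0) then 1 else 0.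

Lemma act_uX_omega_dX i l :
  act (U_endo ^+ i * W * D_endo ^+ l) (delta true 0 0) = delta false i l.
Proof.
have DX l' : act (D_endo ^+ l') (delta true 0 0) = delta true 0 l'.
  elim: l' => [|l' IHl']; first by rewrite expr0.
  rewrite exprS act_mul IHl'.
  apply: funext => -[]; apply: funext => -[|k]; apply: funext => -[|m];
  by rewrite /= /D_act /delta /= ?expr0 ?mul1r ?mulr0 ?addr0.
have UX i' : act (U_endo ^+ i') (delta false 0 l) = delta false i' l.
  elim: i' => [|i' IHi']; first by rewrite expr0.
  rewrite exprS act_mul IHi'.
  by apply: funext => -[]; apply: funext => -[|k]; apply: funext => m.
rewrite !act_mul DX act_omega -UX; congr (act _ _).
by apply: funext => -[]; apply: funext => -[|k]; apply: funext => m.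
Qed.

End Model.

Section AlgHom.
Variables (K : fieldType) (A B : algType K) (f : A -> B).
Hypothesis f_hom : is_alg_hom f.

Lemma alg_hom0 : f 0 = 0.
Proof. by case: f_hom => fD _; apply: (addrI (f 0)); rewrite -fD !addr0. Qed.

Lemma alg_homB x y : f (x - y) = f x - f y.
Proof.
case: f_hom => fD _; apply: (addIr (f y)).
by rewrite -fD !subrK.
Qed.

Lemma alg_hom_sum I (r : seq I) (P : pred I) (F : I -> A) :
  f (\sum_(i <- r | P i) F i) = \sum_(i <- r | P i) f (F i).
Proof. by case: f_hom => fD _; apply: (big_morph f fD alg_hom0). Qed.

Lemma alg_homX x n : f (x ^+ n) = f x ^+ n.
Proof.
case: f_hom => _ [_ [fM f1]].
by elim: n => [|n IHn]; rewrite ?expr0 // !exprS fM IHn.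
Qed.

Lemma alg_hom_omega al d u : f (omega al d u) = omega al (f d) (f u).
Proof. by case: f_hom => _ [fZ [fM f1]]; rewrite /omega !alg_homB fZ !fM f1. Qed.

End AlgHom.

(** * Linear independence *)

Section Independence.
Variables (K : fieldType) (al : K) (A : algType K) (d u : A).
Hypothesis HA : is_downup_algebra al 0 1 d u.
Local Notation w := (omega al d u).

Lemma uwd_independent n (c : nat -> nat -> K) :
  in_ideal_sq w (\sum_(i < n) \sum_(l < n) c i l *: (u ^+ i * w * d ^+ l)) ->
  forall i l, (i < n)%N -> (l < n)%N -> c i l = 0.
Proof.
move=> [s [Hs sumE]] i0 l0 lt_i0n lt_l0n.
have [f [f_hom fd fu _]] := HA.2 _ _ _ (model_downup_rel al).
have [_ [fZ [fM _]]] := f_hom.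
pose coord (T : endo K) := act T (delta K true 0 0) false i0 l0.
have coordD : {morph coord : T T' / T + T'} by [].
have ideal_lowering x : in_ideal w x -> lowering (f x).
  move=> [r ->]; rewrite alg_hom_sum //.
  apply: big_ind => [||p _]; [exact: lowering0 | exact: loweringD |].
  by rewrite !fM alg_hom_omega // fd fu; apply: lowering_omega.
have : coord (f (\sum_(p <- s) p.1 * p.2)) = 0.
  rewrite alg_hom_sum // (big_morph coord coordD (erefl _)) big_seq big1 // => p /Hs[p1 p2].
  by rewrite fM /coord lowering_mul //; apply: ideal_lowering.
rewrite -sumE alg_hom_sum // (big_morph coord coordD (erefl _)).
under eq_bigr do rewrite alg_hom_sum // (big_morph coord coordD (erefl _)).
under eq_bigr do under eq_bigr do
  rewrite fZ !fM alg_hom_omega // (alg_homX f_hom u) (alg_homX f_hom d) fd fu /coord act_scale act_uX_omega_dX.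
rewrite (@sum_square1 _ n i0 l0 (fun i l => vscale (c i l) (delta K false i l) false i0 l0)) //.
  by rewrite /vscale /delta !eqxx mulr1.
by move=> i l; rewrite /vscale /delta /= eq_sym xpair_eqE => /negbTE ->; rewrite mulr0.
Qed.

End Independence.

Theorem corollary2p6 (K : fieldType) (charK0 : [pchar K] =i pred0) (al : K)
    (A : algType K) (d u : A) (HA : is_downup_algebra al 0 1 d u) :
  let w := d * u - al *: (u * d) - 1 in
  (forall p : A, in_ideal w p ->
     exists (n : nat) (c : nat -> nat -> K),
       in_ideal_sq w (p - \sum_(i < n) \sum_(l < n) c i l *: (u ^+ i * w * d ^+ l))) /\
  (forall (n : nat) (c : nat -> nat -> K),
     in_ideal_sq w (\sum_(i < n) \sum_(l < n) c i l *: (u ^+ i * w * d ^+ l)) ->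
     forall i l : nat, (i < n)%N -> (l < n)%N -> c i l = 0) /\
  (al != 1 ->
   forall i l : nat,
     in_ideal_sq w (u ^+ i * w * d ^+ l * u
        - ((al ^+ l - 1) / (al - 1)) *: (u ^+ i * w * d ^+ l.-1)) /\
     in_ideal_sq w (d * u ^+ i * w * d ^+ l
        - ((al ^+ i - 1) / (al - 1)) *: (u ^+ i.-1 * w * d ^+ l))).
Proof.
move=> w; rewrite /w -/(omega al d u).
split; first exact: ideal_span_uwd.
split; first exact: uwd_independent.
move=> al_neq1 i l; rewrite -!qnatE //; split.
- exact: uX_omega_dX_u HA.1 i l.
- exact: d_uX_omega_dX HA.1 i l.
Qed.
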